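(* Let $\gamma_a,\gamma_s>0$, $\lambda\ge0$, $q>0$, $\sigma_B>0$, $\varepsilon_a>0$, and let $\beta_a,\beta_s:\mathbb R\to\mathbb R$ be globally Lipschitz continuous with $\beta_a\ge0$, $\beta_s>0$. Consider the maximal solution $(T_a,T_s)$ of \[ \begin{cases} \gamma_a T_a'=-\lambda(T_a-T_s)+\varepsilon_a\sigma_B|T_s|^3T_s-2\varepsilon_a\sigma_B|T_a|^3T_a+q\beta_a(T_a),\\ \gamma_s T_s'=-\lambda(T_s-T_a)-\sigma_B|T_s|^3T_s+\varepsilon_a\sigma_B|T_a|^3T_a+q\beta_s(T_s),\\ T_a(0)=T_a^{(0)},\quad T_s(0)=T_s^{(0)} \end{cases} \] with $T_a^{(0)}\ge0$ and $T_s^{(0)}\ge0$. Then for every positive time $t$ at which the solution exists, $T_a(t)>0$ and $T_s(t)>0$. *)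

From Stdlib Require Import Reals.
Open Scope R_scope.

Definition globally_lipschitz (f : R -> R) : Prop :=
  exists L : R, forall x y : R, Rabs (f x - f y) <= L * Rabs (x - y).

Definition right_cont_at0 (g : R -> R) (T v : R) : Prop :=
  forall eps : R, 0 < eps -> exists delta : R, 0 < delta /\
    forall s : R, 0 <= s -> s < delta -> s < T -> Rabs (g s - v) < eps.

Definition rhs_a (ga lam q sB ea : R) (ba : R -> R) (Ta Ts : R) : R :=
  (- lam * (Ta - Ts) + ea * sB * (Rabs Ts ^ 3 * Ts)
   - 2 * ea * sB * (Rabs Ta ^ 3 * Ta) + q * ba Ta) / ga.

Definition rhs_s (gs lam q sB ea : R) (bs : R -> R) (Ta Ts : R) : R :=
  (- lam * (Ts - Ta) - sB * (Rabs Ts ^ 3 * Ts)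
   + ea * sB * (Rabs Ta ^ 3 * Ta) + q * bs Ts) / gs.

Definition is_solution_on (ga gs lam q sB ea : R) (ba bs : R -> R)
    (Ta0 Ts0 T : R) (Ta Ts : R -> R) : Prop :=
  Ta 0 = Ta0 /\ Ts 0 = Ts0 /\
  right_cont_at0 Ta T Ta0 /\ right_cont_at0 Ts T Ts0 /\
  forall t : R, 0 < t < T ->
    derivable_pt_lim Ta t (rhs_a ga lam q sB ea ba (Ta t) (Ts t)) /\
    derivable_pt_lim Ts t (rhs_s gs lam q sB ea bs (Ta t) (Ts t)).

(** Where [Ts <= 0 <= Ta] the right-hand side for [Ts] is positive, and where
    [Ta <= 0 < Ts] the right-hand side for [Ta] is positive, because [bs > 0],
    [ba >= 0] and [|x|^3 x] has the sign of [x].  Hence neither component can be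
    the first to leave the positive quadrant: at the first zero of
    [min Ta Ts] the vanishing component would have positive derivative, so it
    would already be negative just before.  Near [t = 0] the data may vanish and
    [Ta] may dip slightly below [0]; there the Lipschitz bound on [bs] still makes
    [Ts' > 0] whenever [Ts <= 0] and both components are close to their
    nonnegative initial values, which makes [Ts], and then [Ta], positive on a
    short interval [(0, b]]. *)

From Stdlib Require Import Reals Lra Psatz.
Open Scope R_scope.

Lemma continuity_pt_eps_delta (h : R -> R) (c : R) :
  continuity_pt h c <->
  forall eps, 0 < eps -> exists d, 0 < d /\
    forall y, Rabs (y - c) < d -> Rabs (h y - h c) < eps.
Proof.
  split.
  - intros Hc eps Heps.
    destruct (Hc eps Heps) as [d [Hd Hy]].
    exists d; split; [exact Hd|]. intros y Hyc.
    destruct (Req_dec y c) as [->|Hne].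
    + rewrite Rminus_diag, Rabs_R0; exact Heps.
    + apply (Hy y); split; [split; [exact I|auto]|exact Hyc].
  - intros Hc eps Heps.
    destruct (Hc eps Heps) as [d [Hd Hy]].
    exists d; split; [exact Hd|]. intros y [_ Hyc]. exact (Hy y Hyc).
Qed.

Lemma continuity_pt_gt (h : R -> R) (c r : R) :
  continuity_pt h c -> r < h c ->
  exists d, 0 < d /\ forall y, Rabs (y - c) < d -> r < h y.
Proof.
  rewrite continuity_pt_eps_delta. intros Hc Hr.
  destruct (Hc (h c - r) ltac:(lra)) as [d [Hd Hnear]].
  exists d. split; [exact Hd|]. intros y Hy.
  specialize (Hnear y Hy). apply Rabs_def2 in Hnear. lra.
Qed.

Lemma continuity_pt_lt (h : R -> R) (c r : R) :
  continuity_pt h c -> h c < r ->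
  exists d, 0 < d /\ forall y, Rabs (y - c) < d -> h y < r.
Proof.
  rewrite continuity_pt_eps_delta. intros Hc Hr.
  destruct (Hc (r - h c) ltac:(lra)) as [d [Hd Hnear]].
  exists d. split; [exact Hd|]. intros y Hy.
  specialize (Hnear y Hy). apply Rabs_def2 in Hnear. lra.
Qed.

Lemma continuity_pt_Rmin (f g : R -> R) (c : R) :
  continuity_pt f c -> continuity_pt g c ->
  continuity_pt (fun y => Rmin (f y) (g y)) c.
Proof.
  rewrite !continuity_pt_eps_delta. intros Hf Hg eps Heps.
  destruct (Hf eps Heps) as [df [Hdf Hyf]], (Hg eps Heps) as [dg [Hdg Hyg]].
  exists (Rmin df dg); split; [now apply Rmin_pos|].
  intros y Hy.
  assert (Hfy := Hyf y (Rlt_le_trans _ _ _ Hy (Rmin_l _ _))).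
  assert (Hgy := Hyg y (Rlt_le_trans _ _ _ Hy (Rmin_r _ _))).
  apply Rabs_def2 in Hfy, Hgy. apply Rabs_def1;
    unfold Rmin; destruct Rle_dec, Rle_dec; lra.
Qed.

Lemma first_zero (h : R -> R) (a b : R) :
  a <= b -> (forall x, a <= x <= b -> continuity_pt h x) ->
  0 < h a -> h b <= 0 ->
  exists c, a < c <= b /\ h c = 0 /\ forall x, a <= x < c -> 0 < h x.
Proof.
  intros Hab Hcont Ha Hb.
  set (E := fun x => a <= x <= b /\ forall y, a <= y <= x -> 0 < h y).
  assert (HEa : E a)
    by (split; [lra|]; intros y Hy; replace y with a by lra; exact Ha).
  destruct (completeness E) as [c [Hub Hlub]].
  { exists b. intros x [Hx _]. lra. }
  { exists a. exact HEa. }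
  assert (Hac : a <= c) by (apply Hub, HEa).
  assert (Hcb : c <= b) by (apply Hlub; intros x [Hx _]; lra).
  assert (Hbefore : forall x, a <= x < c -> 0 < h x).
  { intros x Hx. destruct (Rlt_or_le 0 (h x)) as [|Hhx]; [assumption|exfalso].
    assert (c <= x); [|lra].
    apply Hlub. intros z [Hz Hpos]. destruct (Rle_or_lt z x); [assumption|].
    specialize (Hpos x ltac:(lra)). lra. }
  assert (Hhc : h c = 0).
  { destruct (Rtotal_order (h c) 0) as [Hneg|[Hzero|Hpos]];
      [exfalso|exact Hzero|exfalso].
    - destruct (continuity_pt_lt h c 0 (Hcont c ltac:(lra)) Hneg) as [d [Hd Hnear]].
      assert (Hac' : a < c) by (destruct (Req_dec a c) as [<-|]; lra).
      set (y := Rmax a (c - d / 2)).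
      assert (a <= y) by apply Rmax_l. assert (c - d / 2 <= y) by apply Rmax_r.
      assert (y < c) by (unfold y; apply Rmax_lub_lt; lra).
      specialize (Hnear y ltac:(rewrite Rabs_left; lra)).
      specialize (Hbefore y ltac:(lra)). lra.
    - destruct (continuity_pt_gt h c 0 (Hcont c ltac:(lra)) Hpos) as [d [Hd Hnear]].
      assert (Hcb' : c < b) by (destruct (Req_dec c b) as [->|]; lra).
      set (z := Rmin b (c + d / 2)).
      assert (z <= b) by apply Rmin_l. assert (z <= c + d / 2) by apply Rmin_r.
      assert (c < z) by (unfold z; apply Rmin_glb_lt; lra).
      enough (z <= c) by lra.
      apply Hub. split; [lra|]. intros y Hy.
      destruct (Rlt_or_le y c); [apply Hbefore; lra|].
      apply Hnear. rewrite Rabs_pos_eq; lra. }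
  exists c. split; [|split; assumption].
  split; [destruct (Req_dec a c) as [<-|]; lra|exact Hcb].
Qed.

Lemma deriv_pos_exists_lt_left (f : R -> R) (x l a : R) :
  derivable_pt_lim f x l -> 0 < l -> a < x ->
  exists y, a < y < x /\ f y < f x.
Proof.
  intros Hf Hl Hax.
  destruct (Hf l Hl) as [[d Hd] Hq]; simpl in Hq.
  set (h := - Rmin (d / 2) ((x - a) / 2)).
  assert (Hmin : 0 < Rmin (d / 2) ((x - a) / 2)) by (apply Rmin_pos; lra).
  assert (Hmd := Rmin_l (d / 2) ((x - a) / 2)).
  assert (Hma := Rmin_r (d / 2) ((x - a) / 2)).
  assert (Hh : Rabs h < d) by (unfold h; rewrite Rabs_Ropp, Rabs_pos_eq; lra).
  specialize (Hq h ltac:(unfold h; lra) Hh). apply Rabs_def2 in Hq.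
  set (Q := (f (x + h) - f x) / h) in Hq.
  assert (HQ : f (x + h) - f x = Q * h) by (unfold Q; field; unfold h; lra).
  exists (x + h); split; [unfold h; lra|].
  assert (Q * h < 0) by (apply Rmult_pos_neg; [lra|unfold h; lra]).
  lra.
Qed.

Lemma pos_of_pos_before (f : R -> R) (c l a : R) :
  derivable_pt_lim f c l -> a < c -> (forall y, a < y < c -> 0 < f y) ->
  (f c <= 0 -> 0 < l) -> 0 < f c.
Proof.
  intros Hf Hac Hbefore Hl.
  destruct (Rlt_or_le 0 (f c)) as [|Hfc]; [assumption|exfalso].
  destruct (deriv_pos_exists_lt_left f c l a Hf (Hl Hfc) Hac) as [y [Hy Hfy]].
  specialize (Hbefore y Hy). lra.
Qed.

Lemma lt_of_deriv_pos_where_nonpos (f D : R -> R) (a b : R) :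
  (forall x, a < x <= b -> derivable_pt_lim f x (D x)) ->
  (forall x, a < x <= b -> f x <= 0 -> 0 < D x) ->
  f b <= 0 -> forall x, a < x < b -> f x < f b.
Proof.
  intros Hder Hpos Hb x Hx.
  assert (Hnomin : forall m, x < m <= b -> ~ (forall y, x <= y <= b -> f m <= f y)).
  { intros m Hm Hmin.
    assert (Hfm : f m <= 0) by (specialize (Hmin b ltac:(lra)); lra).
    destruct (deriv_pos_exists_lt_left f m (D m) x) as [y [Hy Hfy]];
      [apply Hder; lra|apply Hpos; [lra|exact Hfm]|lra|].
    specialize (Hmin y ltac:(lra)). lra. }
  destruct (continuity_ab_min f x b) as [m [Hmin Hm]]; [lra| |].
  { intros y Hy. apply derivable_continuous_pt. exists (D y). apply Hder. lra. }
  destruct (Req_dec m x) as [->|Hmx];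
    [|exfalso; apply (Hnomin m); [lra|exact Hmin]].
  destruct (Rle_lt_or_eq_dec _ _ (Hmin b ltac:(lra))) as [|Heq]; [assumption|].
  exfalso. apply (Hnomin b); [lra|]. intros y Hy. rewrite <- Heq. apply Hmin, Hy.
Qed.

Lemma pos_of_deriv_pos_where_nonpos (f D : R -> R) (f0 T b : R) :
  0 <= f0 -> b <= T -> right_cont_at0 f T f0 ->
  (forall x, 0 < x <= b -> derivable_pt_lim f x (D x)) ->
  (forall x, 0 < x <= b -> f x <= 0 -> 0 < D x) ->
  forall x, 0 < x <= b -> 0 < f x.
Proof.
  intros Hf0 HbT Hrc Hder Hpos x Hx.
  destruct (Rlt_or_le 0 (f x)) as [|Hfx]; [assumption|exfalso].
  (* Then [f < f (x / 2) < 0] on [(0, x / 2)], against [f 0+ = f0 >= 0]. *)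
  assert (Hhalf : f (x / 2) < f x).
  { apply (lt_of_deriv_pos_where_nonpos f D 0 x); try lra;
      intros y Hy; [apply Hder|apply Hpos]; lra. }
  assert (Hsmall : forall y, 0 < y < x / 2 -> f y < f (x / 2)).
  { apply (lt_of_deriv_pos_where_nonpos f D 0 (x / 2)); try lra;
      intros y Hy; [apply Hder|apply Hpos]; lra. }
  destruct (Hrc (- f (x / 2)) ltac:(lra)) as [d [Hd Hnear]].
  set (y := Rmin (d / 2) (x / 4)).
  assert (y <= d / 2) by apply Rmin_l. assert (y <= x / 4) by apply Rmin_r.
  assert (0 < y) by (unfold y; apply Rmin_pos; lra).
  assert (Hy := Hnear y ltac:(lra) ltac:(lra) ltac:(lra)).
  apply Rabs_def2 in Hy. specialize (Hsmall y ltac:(lra)). lra.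
Qed.

Lemma pos_pair_propagates (f g Df Dg : R -> R) (a b : R) :
  a <= b ->
  (forall x, a <= x <= b ->
     derivable_pt_lim f x (Df x) /\ derivable_pt_lim g x (Dg x)) ->
  (forall x, a < x <= b -> f x <= 0 -> 0 <= g x -> 0 < Df x) ->
  (forall x, a < x <= b -> g x <= 0 -> 0 < f x -> 0 < Dg x) ->
  0 < f a -> 0 < g a -> 0 < f b /\ 0 < g b.
Proof.
  intros Hab Hder Hf Hg Hfa Hga.
  set (h := fun x => Rmin (f x) (g x)).
  destruct (Rlt_or_le 0 (h b)) as [Hhb|Hhb]; [now apply Rmin_Rgt in Hhb|exfalso].
  destruct (first_zero h a b) as [c [Hc [Hhc Hbefore]]];
    [exact Hab| |now apply Rmin_pos|exact Hhb|].
  { intros x Hx. destruct (Hder x Hx) as [Hdf Hdg].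
    apply continuity_pt_Rmin; apply derivable_continuous_pt;
      [exists (Df x)|exists (Dg x)]; assumption. }
  assert (Hfgbefore : forall y, a < y < c -> 0 < f y /\ 0 < g y).
  { intros y Hy. apply Rmin_Rgt, Hbefore. lra. }
  assert (Hgc : 0 <= g c) by (rewrite <- Hhc; apply Rmin_r).
  destruct (Hder c ltac:(lra)) as [Hdf Hdg].
  assert (Hfc : 0 < f c).
  { apply (pos_of_pos_before f c (Df c) a Hdf); [lra| |].
    - intros y Hy. apply Hfgbefore, Hy.
    - intros Hfc. apply Hf; [lra|exact Hfc|exact Hgc]. }
  assert (Hgc' : 0 < g c).
  { apply (pos_of_pos_before g c (Dg c) a Hdg); [lra| |].
    - intros y Hy. apply Hfgbefore, Hy.
    - intros Hgc'. apply Hg; [lra|exact Hgc'|exact Hfc]. }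
  assert (0 < h c) by (apply Rmin_pos; assumption). lra.
Qed.

Lemma Rabs_pow3_mul_nonneg (x : R) : 0 <= x -> 0 <= Rabs x ^ 3 * x.
Proof.
  intros Hx. rewrite Rabs_pos_eq by lra. apply Rmult_le_pos; [apply pow_le|]; lra.
Qed.

Lemma Rabs_pow3_mul_pos (x : R) : 0 < x -> 0 < Rabs x ^ 3 * x.
Proof.
  intros Hx. rewrite Rabs_pos_eq by lra.
  apply Rmult_lt_0_compat; [apply pow_lt|]; lra.
Qed.

Lemma Rabs_pow3_mul_nonpos (x : R) : x <= 0 -> Rabs x ^ 3 * x <= 0.
Proof.
  intros Hx. rewrite Rabs_left1 by lra.
  assert (0 <= (- x) ^ 3) by (apply pow_le; lra). nra.
Qed.

Lemma Rabs_pow3_mul_ge (x e : R) : 0 <= e <= 1 -> -e < x -> -e <= Rabs x ^ 3 * x.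
Proof.
  intros He Hx. destruct (Rle_or_lt 0 x) as [Hx0|Hx0].
  - pose proof (Rabs_pow3_mul_nonneg x Hx0). lra.
  - rewrite Rabs_left by lra.
    assert (0 <= (- x) ^ 3) by (apply pow_le; lra).
    assert ((- x) ^ 3 <= 1) by (rewrite <- (pow1 3); apply pow_incr; lra).
    nra.
Qed.

Section TwoLayerModel.

Context {ga gs lam q sB ea : R} {ba bs : R -> R}.
Hypotheses (hga : 0 < ga) (hgs : 0 < gs) (hlam : 0 <= lam) (hq : 0 < q)
  (hsB : 0 < sB) (hea : 0 < ea).
Hypotheses (hba : forall x, 0 <= ba x) (hbs : forall x, 0 < bs x).

Lemma rhs_s_pos (Ta Ts : R) :
  0 <= Ta -> Ts <= 0 -> 0 < rhs_s gs lam q sB ea bs Ta Ts.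
Proof.
  intros HTa HTs. unfold rhs_s. apply Rdiv_lt_0_compat; [|exact hgs].
  pose proof (Rabs_pow3_mul_nonpos Ts HTs).
  pose proof (Rabs_pow3_mul_nonneg Ta HTa).
  assert (0 < ea * sB) by nra. specialize (hbs Ts). nra.
Qed.

Lemma rhs_a_pos (Ta Ts : R) :
  Ta <= 0 -> 0 < Ts -> 0 < rhs_a ga lam q sB ea ba Ta Ts.
Proof.
  intros HTa HTs. unfold rhs_a. apply Rdiv_lt_0_compat; [|exact hga].
  pose proof (Rabs_pow3_mul_nonpos Ta HTa).
  pose proof (Rabs_pow3_mul_pos Ts HTs).
  assert (0 < ea * sB) by nra. specialize (hba Ta). nra.
Qed.

Lemma rhs_s_pos_near_origin :
  globally_lipschitz bs ->
  exists e, 0 < e /\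
    forall Ta Ts, -e < Ta -> -e < Ts <= 0 -> 0 < rhs_s gs lam q sB ea bs Ta Ts.
Proof.
  intros [L HL].
  (* For [Ta, Ts > -e] the terms other than [q * bs 0] lose at most [e * K]. *)
  set (K := q * Rabs L + lam + ea * sB).
  set (c := q * bs 0).
  assert (HK : 0 <= K) by (pose proof (Rabs_pos L); unfold K; nra).
  assert (Hc : 0 < c) by (specialize (hbs 0); unfold c; nra).
  set (e := c / (c + K + 1)).
  assert (He_def : e * (c + K + 1) = c) by (unfold e; field; lra).
  assert (He : 0 < e) by (unfold e; apply Rdiv_lt_0_compat; lra).
  assert (He1 : e < 1) by nra.
  exists e. split; [exact He|].
  intros Ta Ts HTa [HTs HTs0]. unfold rhs_s. apply Rdiv_lt_0_compat; [|exact hgs].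
  pose proof (Rabs_pow3_mul_nonpos Ts HTs0).
  pose proof (Rabs_pow3_mul_ge Ta e ltac:(lra) HTa).
  assert (Hbs : bs 0 - Rabs L * e <= bs Ts).
  { specialize (HL Ts 0). rewrite Rminus_0_r, (Rabs_left1 Ts) in HL by lra.
    assert (bs 0 - bs Ts <= Rabs (bs Ts - bs 0))
      by (rewrite Rabs_minus_sym; apply Rle_abs).
    assert (L * - Ts <= Rabs L * e).
    { apply Rle_trans with (Rabs L * - Ts).
      - apply Rmult_le_compat_r; [lra|apply Rle_abs].
      - apply Rmult_le_compat_l; [apply Rabs_pos|lra]. }
    lra. }
  assert (0 < ea * sB) by nra.
  unfold K, c in *. nra.
Qed.

Context {Ta0 Ts0 T : R} {Ta Ts : R -> R}.
Hypotheses (hTa0 : 0 <= Ta0) (hTs0 : 0 <= Ts0)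
  (hsol : is_solution_on ga gs lam q sB ea ba bs Ta0 Ts0 T Ta Ts).

Lemma solution_pos_near_0 :
  globally_lipschitz bs -> 0 < T ->
  exists b, 0 < b < T /\ forall t, 0 < t <= b -> 0 < Ta t /\ 0 < Ts t.
Proof.
  intros hbs_lip hT.
  destruct hsol as [_ [_ [rcA [rcS hder]]]].
  destruct (rhs_s_pos_near_origin hbs_lip) as [e [He Hrhs]].
  destruct (rcA e He) as [dA [HdA HnearA]], (rcS e He) as [dS [HdS HnearS]].
  set (b := Rmin (Rmin dA dS) T / 2).
  assert (Hb : 0 < b /\ b < dA /\ b < dS /\ b < T).
  { pose proof (Rmin_l (Rmin dA dS) T). pose proof (Rmin_r (Rmin dA dS) T).
    pose proof (Rmin_l dA dS). pose proof (Rmin_r dA dS).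
    assert (0 < Rmin (Rmin dA dS) T) by (repeat apply Rmin_pos; assumption).
    unfold b. lra. }
  assert (Hnear : forall x, 0 < x <= b -> -e < Ta x /\ -e < Ts x).
  { intros x Hx.
    specialize (HnearA x ltac:(lra) ltac:(lra) ltac:(lra)).
    specialize (HnearS x ltac:(lra) ltac:(lra) ltac:(lra)).
    apply Rabs_def2 in HnearA, HnearS. lra. }
  assert (HTs : forall x, 0 < x <= b -> 0 < Ts x).
  { apply (pos_of_deriv_pos_where_nonpos Ts
             (fun x => rhs_s gs lam q sB ea bs (Ta x) (Ts x)) Ts0 T b);
      [exact hTs0|lra|exact rcS| |].
    - intros x Hx. apply hder. lra.
    - intros x Hx HTsx. destruct (Hnear x Hx). apply Hrhs; lra. }
  assert (HTa : forall x, 0 < x <= b -> 0 < Ta x).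
  { apply (pos_of_deriv_pos_where_nonpos Ta
             (fun x => rhs_a ga lam q sB ea ba (Ta x) (Ts x)) Ta0 T b);
      [exact hTa0|lra|exact rcA| |].
    - intros x Hx. apply hder. lra.
    - intros x Hx HTax. apply rhs_a_pos; [exact HTax|apply HTs, Hx]. }
  exists b. split; [lra|]. intros t Ht. split; [apply HTa|apply HTs]; exact Ht.
Qed.

End TwoLayerModel.

Theorem lemma4p1 (ga gs lam q sB ea : R) (ba bs : R -> R)
    (Ta0 Ts0 T : R) (Ta Ts : R -> R)
    (hga : 0 < ga) (hgs : 0 < gs) (hlam : 0 <= lam) (hq : 0 < q)
    (hsB : 0 < sB) (hea : 0 < ea)
    (hba_lip : globally_lipschitz ba) (hbs_lip : globally_lipschitz bs)
    (hba : forall x : R, 0 <= ba x) (hbs : forall x : R, 0 < bs x)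
    (hTa0 : 0 <= Ta0) (hTs0 : 0 <= Ts0)
    (hsol : is_solution_on ga gs lam q sB ea ba bs Ta0 Ts0 T Ta Ts) :
  forall t : R, 0 < t < T -> 0 < Ta t /\ 0 < Ts t.
Proof.
  intros t Ht.
  (* Only the sign of [ba] matters. *)
  destruct (solution_pos_near_0 hga hgs hlam hq hsB hea hba hbs hTa0 hTs0 hsol
              hbs_lip ltac:(lra)) as [b [Hb Hpos]].
  destruct (Rle_or_lt t b) as [Htb|Htb]; [apply Hpos; lra|].
  destruct (Hpos b ltac:(lra)) as [HTab HTsb].
  destruct hsol as [_ [_ [_ [_ hder]]]].
  enough (0 < Ts t /\ 0 < Ta t) by tauto.
  apply (pos_pair_propagates Ts Ta
           (fun x => rhs_s gs lam q sB ea bs (Ta x) (Ts x))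
           (fun x => rhs_a ga lam q sB ea ba (Ta x) (Ts x)) b t); try lra.
  - intros x Hx. destruct (hder x ltac:(lra)). split; assumption.
  - intros x Hx HTsx HTax. exact (rhs_s_pos hgs hlam hq hsB hea hbs _ _ HTax HTsx).
  - intros x Hx HTax HTsx. exact (rhs_a_pos hga hlam hq hsB hea hba _ _ HTax HTsx).
Qed.
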